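(* Let $w \in \mathbb{R}^n$ with $w_j > 0$ for all $j$, and let $x \in \mathbb{R}^n$ with $x_j > 0$ for $2 \le j \le n$. Set $b_j = \frac{w_1}{w_j} x_j$ for $2 \le j\le n$ and $b_1 = x_1^-$, and assume the coordinates $2,\dots,n$ are ordered so that $b_1 \le 0 < b_2 \le b_3 \le \dots \le b_n$. Define $B_1 = \{2,\dots,n\}$, $B_k = \{k+1,\dots,n\}$ for $2 \le k \le n-1$, $B_n = \emptyset$, and intervals $T_1 = [b_1, b_2]$, $T_k = (b_k, b_{k+1}]$ for $2 \le k \le n-1$, $T_n = (b_n, \infty)$. For $1 \le k \le n$ let \[ t_k = w_1 \, \frac{w_1 x_1 + \sum_{j \in B_k} w_j x_j}{w_1^2 + \sum_{j \in B_k} w_j^2}. \] Let $t^* = \arg\min_{t \in [b_1,\infty)} \|x - \phi_t(x)\|$. If $t_k \in T_k$ for some $k$, then $t^* = t_k$, and the set of indices $j\in\{2,\dots,n\}$ with $b_j \ge t^*$ equals $B_k$.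
   Context: $\|\cdot\|$ is the Euclidean norm on $\mathbb{R}^n$. For $t \in \mathbb{R}$, $\phi_t : \mathbb{R}^n \to \mathbb{R}^n$ is defined by $\phi_t(x)_1 = t$, and for $j \ne 1$: $\phi_t(x)_j = \frac{w_j}{w_1} t$ if $\frac{w_1}{w_j} x_j \ge t$, and $\phi_t(x)_j = x_j$ otherwise. $x_1^- := \min\{0, x_1\}$. *)

(* real numbers from Stdlib Reals.
   Vectors of R^n are represented as functions nat -> R, using 1-based
   indices 1..n; values outside 1..n are irrelevant. *)
From Stdlib Require Import Reals List.
Import ListNotations.
Open Scope R_scope.

Definition sum_from (m len : nat) (f : nat -> R) : R :=
  fold_right Rplus 0 (map f (seq m len)).

Definition norm (n : nat) (v : nat -> R) : R :=
  sqrt (sum_from 1 n (fun j => v j ^ 2)).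

Definition vsub (x y : nat -> R) : nat -> R := fun j => x j - y j.

Definition negpart (a : R) : R := Rmin 0 a.

Definition phi (w : nat -> R) (t : R) (x : nat -> R) : nat -> R :=
  fun j => if Nat.eqb j 1 then t
           else if Rle_dec t (w 1%nat / w j * x j) then w j / w 1%nat * t
           else x j.

Definition bvec (w x : nat -> R) : nat -> R :=
  fun j => if Nat.eqb j 1 then negpart (x 1%nat) else w 1%nat / w j * x j.

Definition inB (n k j : nat) : Prop := (k + 1 <= j <= n)%nat.

Definition tk (n : nat) (w x : nat -> R) (k : nat) : R :=
  w 1%nat * (w 1%nat * x 1%nat + sum_from (k + 1) (n - k) (fun j => w j * x j))
  / (w 1%nat ^ 2 + sum_from (k + 1) (n - k) (fun j => w j ^ 2)).

Definition inT (n : nat) (b : nat -> R) (k : nat) (t : R) : Prop :=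
  (k = 1%nat /\ b 1%nat <= t <= b 2%nat)
  \/ ((2 <= k <= n - 1)%nat /\ b k < t <= b (k + 1)%nat)
  \/ (k = n /\ b n < t).

Definition is_argmin (n : nat) (w x : nat -> R) (tstar : R) : Prop :=
  bvec w x 1%nat <= tstar /\
  forall t, bvec w x 1%nat <= t ->
    norm n (vsub x (phi w tstar x)) <= norm n (vsub x (phi w t x)).

(* The objective F(t) = ||x - phi_t(x)||^2 is the sum of (x_1 - t)^2 and, for
   j >= 2, of the convex functions (w_j/w_1)^2 max(0, b_j - t)^2.  The
   hypothesis t_k in T_k says that the coordinates j >= 2 moved by phi_{t_k}
   are exactly those of B_k, and the formula for t_k is then the vanishing of the
   derivative of F at t_k.  Convexity of every term and strong convexity of
   the first one give F(t) >= F(t_k) + (t - t_k)^2, so t_k is the unique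
   minimizer. *)
From Stdlib Require Import Reals List Lra Lia Psatz.
Open Scope R_scope.

Lemma sum_from_S m len f : sum_from m (S len) f = f m + sum_from (S m) len f.
Proof. reflexivity. Qed.

Lemma sum_from_app m a b f :
  sum_from m (a + b) f = sum_from m a f + sum_from (m + a) b f.
Proof.
  revert m; induction a as [|a IH]; intro m.
  - rewrite Nat.add_0_l, Nat.add_0_r; change (sum_from m 0 f) with 0; lra.
  - rewrite Nat.add_succ_l, !sum_from_S, IH, Nat.add_succ_l, <- plus_n_Sm; lra.
Qed.

Lemma sum_from_le m len f g :
  (forall j, (m <= j < m + len)%nat -> f j <= g j) ->
  sum_from m len f <= sum_from m len g.
Proof.
  revert m; induction len as [|len IH]; intros m H; [apply Rle_refl|].
  rewrite !sum_from_S; apply Rplus_le_compat; [apply H; lia|].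
  apply IH; intros j Hj; apply H; lia.
Qed.

Lemma sum_from_ext m len f g :
  (forall j, (m <= j < m + len)%nat -> f j = g j) ->
  sum_from m len f = sum_from m len g.
Proof.
  intro H; apply Rle_antisym; apply sum_from_le; intros j Hj; rewrite H; lra || lia.
Qed.

Lemma sum_from_plus m len f g :
  sum_from m len (fun j => f j + g j) = sum_from m len f + sum_from m len g.
Proof. revert m; induction len as [|len IH]; intro m;
  [cbn; ring | rewrite !sum_from_S, IH; ring].
Qed.

Lemma sum_from_scal m len c f :
  sum_from m len (fun j => c * f j) = c * sum_from m len f.
Proof. revert m; induction len as [|len IH]; intro m;
  [cbn; ring | rewrite !sum_from_S, IH; ring].
Qed.

Lemma sum_from_zero m len : sum_from m len (fun _ => 0) = 0.
Proof. revert m; induction len as [|len IH]; intro m;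
  [cbn; ring | rewrite !sum_from_S, IH; ring].
Qed.

Lemma sum_from_nonneg m len f : (forall j, 0 <= f j) -> 0 <= sum_from m len f.
Proof. intro H; rewrite <- (sum_from_zero m len); apply sum_from_le; auto. Qed.

Lemma chain_le (f : nat -> R) m n :
  (forall j, (m <= j < n)%nat -> f j <= f (j + 1)%nat) ->
  forall i j, (m <= i <= j)%nat -> (j <= n)%nat -> f i <= f j.
Proof.
  intros Hstep i j Hij Hjn; replace j with (i + (j - i))%nat by lia.
  assert (Hd : (i + (j - i) <= n)%nat) by lia; revert Hd.
  induction (j - i)%nat as [|d IH]; intro Hd; [rewrite Nat.add_0_r; lra|].
  rewrite <- plus_n_Sm, <- Nat.add_1_r.
  eapply Rle_trans; [apply IH; lia | apply Hstep; lia].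
Qed.

Section Intervals.
Variables (n : nat) (b : nat -> R).
Hypothesis b_mono : forall i j, (2 <= i <= j)%nat -> (j <= n)%nat -> b i <= b j.

Lemma inT_threshold k t :
  inT n b k t -> forall j, (2 <= j <= n)%nat -> (t <= b j <-> inB n k j).
Proof.
  unfold inB; intros [[-> Ht] | [[Hk Ht] | [-> Ht]]] j Hj.
  - split; [lia|]. intros _; eapply Rle_trans; [apply Ht | apply b_mono; lia].
  - split; intro H.
    + destruct (Nat.le_gt_cases (k + 1) j); [lia|].
      assert (b j <= b k) by (apply b_mono; lia); lra.
    + eapply Rle_trans; [apply Ht | apply b_mono; lia].
  - split; [|lia]. intro H; assert (b j <= b n) by (apply b_mono; lia); lra.
Qed.

Lemma inT_ge_b1 k t : (2 <= n)%nat -> b 1%nat <= b 2%nat -> inT n b k t ->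
  b 1%nat <= t.
Proof.
  intros Hn Hb12 [[_ Ht] | [[Hk Ht] | [-> Ht]]]; [lra| |].
  - assert (b 2%nat <= b k) by (apply b_mono; lia); lra.
  - assert (b 2%nat <= b n) by (apply b_mono; lia); lra.
Qed.

End Intervals.

(* Tangent-line inequality at s for the convex function
   u |-> (a max(0, c - u))^2. *)
Lemma clipped_sq_subgradient a c s t :
  (if Rle_dec s c then a * (c - s) else 0) ^ 2
    - 2 * (t - s) * (if Rle_dec s c then a ^ 2 * (c - s) else 0)
  <= (if Rle_dec t c then a * (c - t) else 0) ^ 2.
Proof.
  destruct (Rle_dec s c), (Rle_dec t c).
  - pose proof (pow2_ge_0 (a * (t - s))); nra.
  - assert (0 <= a ^ 2 * (c - s)) by (pose proof (pow2_ge_0 a); nra); nra.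
  - pose proof (pow2_ge_0 (a * (c - t))); lra.
  - lra.
Qed.

Lemma bvec_ne1 w x j : j <> 1%nat -> bvec w x j = w 1%nat / w j * x j.
Proof. intro H; unfold bvec; destruct (Nat.eqb_spec j 1); [lia|reflexivity]. Qed.

Section Projection.
Variables (n : nat) (w x : nat -> R).
Hypothesis w_pos : forall j, (1 <= j <= n)%nat -> 0 < w j.

Definition objective (t : R) : R :=
  sum_from 1 n (fun j => vsub x (phi w t x) j ^ 2).

(* Minus one half of the derivative at s of the j-th squared residual. *)
Definition coord_slope (s : R) (j : nat) : R :=
  if Rle_dec s (bvec w x j) then (w j / w 1%nat) ^ 2 * (bvec w x j - s) else 0.

Lemma objective_nonneg t : 0 <= objective t.
Proof. apply sum_from_nonneg; intro j; apply pow2_ge_0. Qed.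

Lemma objective_split t : (1 <= n)%nat ->
  objective t = (x 1%nat - t) ^ 2
                + sum_from 2 (n - 1) (fun j => vsub x (phi w t x) j ^ 2).
Proof.
  intro Hn; unfold objective; replace n with (S (n - 1)) at 1 by lia.
  rewrite sum_from_S; reflexivity.
Qed.

Lemma residual_coord t j : (2 <= j <= n)%nat ->
  vsub x (phi w t x) j
  = if Rle_dec t (bvec w x j) then w j / w 1%nat * (bvec w x j - t) else 0.
Proof.
  intro Hj; assert (0 < w j) by (apply w_pos; lia).
  assert (0 < w 1%nat) by (apply w_pos; lia).
  unfold vsub, phi; rewrite bvec_ne1 by lia.
  destruct (Nat.eqb_spec j 1); [lia|].
  destruct (Rle_dec t _); [field; lra | ring].
Qed.

Lemma residual_sq_subgradient s t j : (2 <= j <= n)%nat ->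
  vsub x (phi w s x) j ^ 2 - 2 * (t - s) * coord_slope s j
  <= vsub x (phi w t x) j ^ 2.
Proof.
  intro Hj; rewrite !residual_coord by exact Hj.
  apply clipped_sq_subgradient.
Qed.

Lemma objective_quadratic_growth T : (1 <= n)%nat ->
  x 1%nat - T + sum_from 2 (n - 1) (coord_slope T) = 0 ->
  forall t, objective T + (t - T) ^ 2 <= objective t.
Proof.
  intros Hn Hstat t; rewrite !objective_split by exact Hn.
  assert (Hrest :
    sum_from 2 (n - 1)
      (fun j => vsub x (phi w T x) j ^ 2 + (-2 * (t - T)) * coord_slope T j)
    <= sum_from 2 (n - 1) (fun j => vsub x (phi w t x) j ^ 2)).
  { apply sum_from_le; intros j Hj.
    pose proof (residual_sq_subgradient T t j ltac:(lia)); lra. }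
  rewrite sum_from_plus, sum_from_scal in Hrest.
  replace (sum_from 2 (n - 1) (coord_slope T)) with (T - x 1%nat) in Hrest by lra.
  nra.
Qed.

Lemma tk_first_order k : (1 <= k <= n)%nat ->
  x 1%nat - tk n w x k
  + sum_from (k + 1) (n - k)
      (fun j => (w j / w 1%nat) ^ 2 * (bvec w x j - tk n w x k)) = 0.
Proof.
  intro Hk; set (T := tk n w x k).
  assert (Hw1 : 0 < w 1%nat) by (apply w_pos; lia).
  rewrite (sum_from_ext _ _ _
     (fun j => / w 1%nat * (w j * x j) + (- T / w 1%nat ^ 2) * (w j ^ 2))).
  2: { intros j Hj; assert (0 < w j) by (apply w_pos; lia).
       rewrite bvec_ne1 by lia; field; lra. }
  rewrite sum_from_plus, !sum_from_scal.
  assert (0 <= sum_from (k + 1) (n - k) (fun j => w j ^ 2))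
    by (apply sum_from_nonneg; intro; apply pow2_ge_0).
  unfold T, tk; field; split; [nra | lra].
Qed.

Lemma slope_sum_threshold k T : (1 <= k <= n)%nat ->
  (forall j, (2 <= j <= n)%nat -> (T <= bvec w x j <-> inB n k j)) ->
  sum_from 2 (n - 1) (coord_slope T)
  = sum_from (k + 1) (n - k) (fun j => (w j / w 1%nat) ^ 2 * (bvec w x j - T)).
Proof.
  intros Hk Hthr; replace (n - 1)%nat with ((k - 1) + (n - k))%nat by lia.
  rewrite sum_from_app; replace (2 + (k - 1))%nat with (k + 1)%nat by lia.
  rewrite (sum_from_ext 2 (k - 1) _ (fun _ => 0)), sum_from_zero, Rplus_0_l.
  - apply sum_from_ext; intros j Hj; unfold coord_slope.
    destruct (Rle_dec T _) as [|Hnot]; [reflexivity|].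
    exfalso; apply Hnot, Hthr; unfold inB; lia.
  - intros j Hj; unfold coord_slope.
    destruct (Rle_dec T _) as [Hle|]; [|reflexivity].
    apply Hthr in Hle; unfold inB in Hle; lia.
Qed.

Lemma unique_argmin_of_growth T : bvec w x 1%nat <= T ->
  (forall t, objective T + (t - T) ^ 2 <= objective t) ->
  is_argmin n w x T /\ (forall ts, is_argmin n w x ts -> ts = T).
Proof.
  intros HT Hgrow; split.
  - split; [exact HT|]; intros t _.
    change (sqrt (objective T) <= sqrt (objective t)).
    apply sqrt_le_1_alt; pose proof (Hgrow t); pose proof (pow2_ge_0 (t - T)); lra.
  - intros ts [_ Hmin]; specialize (Hmin T HT).
    change (sqrt (objective ts) <= sqrt (objective T)) in Hmin.
    apply sqrt_le_0 in Hmin; try apply objective_nonneg.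
    pose proof (Hgrow ts); pose proof (pow2_ge_0 (ts - T)).
    apply Rminus_diag_uniq, Rsqr_0_uniq; unfold Rsqr; lra.
Qed.

End Projection.

Theorem mainTheorem5 (n : nat) (w x : nat -> R) (k : nat) :
  (2 <= n)%nat ->
  (forall j, (1 <= j <= n)%nat -> 0 < w j) ->
  (forall j, (2 <= j <= n)%nat -> 0 < x j) ->
  bvec w x 1%nat <= 0 ->
  0 < bvec w x 2%nat ->
  (forall j, (2 <= j)%nat -> (j < n)%nat -> bvec w x j <= bvec w x (j + 1)%nat) ->
  (1 <= k <= n)%nat ->
  inT n (bvec w x) k (tk n w x k) ->
  is_argmin n w x (tk n w x k) /\
  (forall tstar, is_argmin n w x tstar -> tstar = tk n w x k) /\
  (forall j, (2 <= j <= n)%nat ->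
     (tk n w x k <= bvec w x j <-> inB n k j)).
Proof.
  intros Hn Hw _ Hb1 Hb2 Hstep Hk HT.
  pose proof (chain_le (bvec w x) 2 n ltac:(intros j Hj; apply Hstep; lia)) as Hmono.
  pose proof (inT_threshold n _ Hmono k _ HT) as Hthr.
  assert (Hstat : x 1%nat - tk n w x k
                  + sum_from 2 (n - 1) (coord_slope w x (tk n w x k)) = 0).
  { rewrite (slope_sum_threshold n w x k) by assumption.
    exact (tk_first_order n w x Hw k Hk). }
  destruct (unique_argmin_of_growth n w x (tk n w x k)) as [Hargmin Huniq].
  - apply (inT_ge_b1 n _ Hmono k); [exact Hn | lra | exact HT].
  - apply (objective_quadratic_growth n w x Hw); [lia | exact Hstat].
  - auto.
Qed.
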